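(* Let $\varphi$ be an $AB\bar B$-formula and let $\mathcal{G}=(\mathbb{P}_N,\mathcal{L})$ be a $\varphi$-compass structure of finite length $N<\omega$ such that $\varphi\in\mathcal{L}(0,y)$ for some $0<y<N$. If there exist rows $0<y_0<y_1<N$ with $Shading_{\mathcal{G}}(y_0)\subseteq Shading_{\mathcal{G}}(y_1)$, then there exists a $\varphi$-compass structure $\mathcal{G}'$ of length $N'<N$ that features $\varphi$.
   Context: $AB\bar B$-formulas are built from propositional variables using $\neg$, $\vee$, and unary modalities $\langle A\rangle,\langle B\rangle,\langle\bar B\rangle$ ($[R]\psi=\neg\langle R\rangle\neg\psi$). The closure $Cl(\varphi)$ is the set of subformulas of $\varphi$ and their negations (identifying $\neg\neg\alpha$ with $\alpha$, $\neg\langle R\rangle\alpha$ with $[R]\neg\alpha$). The extended closure $Cl^+(\varphi)$ is $Cl(\varphi)$ together with all $\langle R\rangle\alpha$ and $\neg\langle R\rangle\alpha$ for $R\in\{A,B,\bar B\}$, $\alpha\in Cl(\varphi)$. A $\varphi$-atom is a nonempty $F\subseteq Cl^+(\varphi)$ such that for every $\alpha\in Cl^+(\varphi)$, $\alpha\in F$ iff $\neg\alpha\notin F$, and for every $\alpha\vee\beta\in Cl^+(\varphi)$, $\alpha\vee\beta\in F$ iff $\alpha\in F$ or $\beta\in F$. For an atom $F$: $obs(F)=\{\alpha\in Cl(\varphi):\alpha\in F\}$ and $Req_R(F)=\{\alpha\in Cl(\varphi):\langle R\rangle\alpha\in F\}$. Define $F\leadsto_A G$ iff $Req_A(F)=obs(G)\cup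 Req_B(G)\cup Req_{\bar B}(G)$; and $F\leadsto_B G$ iff $obs(F)\cup Req_{\bar B}(F)\subseteq Req_{\bar B}(G)\subseteq obs(F)\cup Req_{\bar B}(F)\cup Req_B(F)$ and $obs(G)\cup Req_B(G)\subseteq Req_B(F)\subseteq obs(G)\cup Req_B(G)\cup Req_{\bar B}(G)$. For $N\le\omega$ (identified with $\{0,\dots,N-1\}$), $\mathbb{P}_N=\{(x,y):0\le x<y<N\}$, with relations $(x,y)\,A\,(x',y')$ iff $y=x'$; $(x,y)\,B\,(x',y')$ iff $x=x'$ and $y'<y$; $(x,y)\,\bar B\,(x',y')$ iff $x=x'$ and $y<y'$. A $\varphi$-compass structure of length $N$ is $\mathcal{G}=(\mathbb{P}_N,\mathcal{L})$ with $\mathcal{L}$ mapping points to $\varphi$-atoms such that (consistency) $p\,R\,q$ implies $\mathcal{L}(p)\leadsto_R\mathcal{L}(q)$ for $R\in\{A,B\}$, and (fulfillment) for every $p$, $R\in\{A,B,\bar B\}$, $\alpha\in Req_R(\mathcal{L}(p))$ there is $q$ with $p\,R\,q$ and $\alpha\in obs(\mathcal{L}(q))$. $\mathcal{G}$ features $\alpha$ if $\alpha\in\mathcal{L}(p)$ for some point $p$. The shading of row $y$ is $Shading_{\mathcal{G}}(y)=\{\mathcal{L}(x,y):0\le x<y\}$. *)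

From Stdlib Require Import List Arith.
Import ListNotations.

Inductive rel := RA | RB | RBb.

Inductive formula :=
| Var : nat -> formula
| Neg : formula -> formula
| Or : formula -> formula -> formula
| Dia : rel -> formula -> formula.

Definition neg (f : formula) : formula :=
  match f with Neg g => g | _ => Neg f end.

(* normal form: no double negations; realizes the identification
   neg neg a = a (and hence neg <R> a = [R] neg a) *)
Fixpoint norm (f : formula) : formula :=
  match f with
  | Var p => Var p
  | Neg g => neg (norm g)
  | Or a b => Or (norm a) (norm b)
  | Dia R a => Dia R (norm a)
  end.

Fixpoint subf (f : formula) : list formula :=
  match f with
  | Var p => [Var p]
  | Neg g => Neg g :: subf g
  | Or a b => Or a b :: subf a ++ subf b
  | Dia R a => Dia R a :: subf a
  end.

Definition InCl (phi a : formula) : Prop :=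
  exists b, In b (subf (norm phi)) /\ (a = b \/ a = neg b).

Definition InClp (phi a : formula) : Prop :=
  InCl phi a \/
  exists R b, InCl phi b /\ (a = Dia R b \/ a = Neg (Dia R b)).

Definition atom (phi : formula) (F : formula -> Prop) : Prop :=
  (exists a, F a) /\
  (forall a, F a -> InClp phi a) /\
  (forall a, InClp phi a -> (F a <-> ~ F (neg a))) /\
  (forall a b, InClp phi (Or a b) -> (F (Or a b) <-> F a \/ F b)).

Definition obs (phi : formula) (F : formula -> Prop) (a : formula) : Prop :=
  InCl phi a /\ F a.

Definition Req (phi : formula) (R : rel) (F : formula -> Prop) (a : formula) : Prop :=
  InCl phi a /\ F (Dia R a).

Definition leadsA (phi : formula) (F G : formula -> Prop) : Prop :=
  forall a, Req phi RA F a <->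
    (obs phi G a \/ Req phi RB G a \/ Req phi RBb G a).

Definition leadsB (phi : formula) (F G : formula -> Prop) : Prop :=
  (forall a, obs phi F a \/ Req phi RBb F a -> Req phi RBb G a) /\
  (forall a, Req phi RBb G a -> obs phi F a \/ Req phi RBb F a \/ Req phi RB F a) /\
  (forall a, obs phi G a \/ Req phi RB G a -> Req phi RB F a) /\
  (forall a, Req phi RB F a -> obs phi G a \/ Req phi RB G a \/ Req phi RBb G a).

Definition point := (nat * nat)%type.

Definition inP (N : nat) (p : point) : Prop := fst p < snd p /\ snd p < N.

Definition relP (R : rel) (p q : point) : Prop :=
  match R with
  | RA => snd p = fst q
  | RB => fst p = fst q /\ snd q < snd p
  | RBb => fst p = fst q /\ snd p < snd q
  end.

Definition leads (phi : formula) (R : rel) (F G : formula -> Prop) : Prop :=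
  match R with
  | RA => leadsA phi F G
  | RB => leadsB phi F G
  | RBb => True
  end.

(* phi-compass structure (P_N, L) of length N; L is only relevant on P_N *)
Definition compass (phi : formula) (N : nat) (L : point -> formula -> Prop) : Prop :=
  (forall p, inP N p -> atom phi (L p)) /\
  (forall R p q, R <> RBb -> inP N p -> inP N q -> relP R p q ->
     leads phi R (L p) (L q)) /\
  (forall R p a, inP N p -> Req phi R (L p) a ->
     exists q, inP N q /\ relP R p q /\ obs phi (L q) a).

Definition features (phi : formula) (N : nat) (L : point -> formula -> Prop) : Prop :=
  exists p, inP N p /\ L p (norm phi).

(* Shading(y0) subset of Shading(y1), atoms compared as subsets of Cl^+ *)
Definition shading_sub (L : point -> formula -> Prop) (y0 y1 : nat) : Prop :=
  forall x, x < y0 -> exists x', x' < y1 /\ forall a, L (x, y0) a <-> L (x', y1) a.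

(* Cut out the rows strictly between y0 and y1, d := y1 - y0 of them.  Below
   row y0 nothing changes; above it, column x becomes column h x of the old
   structure shifted down by d, where h maps x < y0 to a point of row y1 with
   the same atom as (x, y0) (the shading inclusion) and x >= y0 to x + d.
   Row y0 thus has two readings, as itself and as row y1, and each consistency
   or fulfilment condition is checked in a reading containing both its ends.
   The only delicate case is a request whose old witness lies in the removed
   strip: it is then a B-bar request of row y0, or a B request of row y1, and
   is fulfilled in the other reading. *)

From Stdlib Require Import Arith Lia ClassicalEpsilon.

Definition same_atom (F G : formula -> Prop) : Prop := forall a, F a <-> G a.

Definition view (phi : formula) (F : formula -> Prop) (a : formula) : Prop :=
  obs phi F a \/ Req phi RB F a \/ Req phi RBb F a.

Lemma same_atom_sym F G : same_atom F G -> same_atom G F.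
Proof. intros H a; symmetry; apply H. Qed.

Lemma obs_same phi F G a : same_atom F G -> obs phi F a -> obs phi G a.
Proof. intros H [Ha Fa]; split; [exact Ha | apply H, Fa]. Qed.

Lemma Req_same phi R F G a : same_atom F G -> Req phi R F a -> Req phi R G a.
Proof. intros H [Ha Fa]; split; [exact Ha | apply H, Fa]. Qed.

Lemma view_same phi F G a : same_atom F G -> view phi F a <-> view phi G a.
Proof.
  intros H; unfold view.
  split; intros [K | [K | K]];
    [left | right; left | right; right | left | right; left | right; right];
    eauto using obs_same, Req_same, same_atom_sym.
Qed.

Lemma leadsA_view phi F G G' :
  (forall a, view phi G a <-> view phi G' a) -> leadsA phi F G -> leadsA phi F G'.
Proof. intros HG H a; rewrite (H a); apply HG. Qed.

Lemma leadsA_same phi F F' G G' :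
  same_atom F F' -> same_atom G G' -> leadsA phi F G -> leadsA phi F' G'.
Proof.
  intros HF HG H a; split; intro K.
  - apply (view_same phi G G' a HG), H.
    exact (Req_same phi RA F' F a (same_atom_sym F F' HF) K).
  - apply (Req_same phi RA F F' a HF), H.
    apply (view_same phi G G' a HG), K.
Qed.

Lemma leadsB_view phi F G : leadsB phi F G -> forall a, view phi F a <-> view phi G a.
Proof.
  intros [H1 [H2 [H3 H4]]] a; unfold view.
  specialize (H1 a); specialize (H2 a); specialize (H3 a); specialize (H4 a); tauto.
Qed.

Lemma leadsB_trans phi F G H : leadsB phi F G -> leadsB phi G H -> leadsB phi F H.
Proof.
  intros [A1 [A2 [A3 A4]]] [B1 [B2 [B3 B4]]];
    split; [|split; [|split]]; intro a;
    specialize (A1 a); specialize (A2 a); specialize (A3 a); specialize (A4 a);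
    specialize (B1 a); specialize (B2 a); specialize (B3 a); specialize (B4 a); tauto.
Qed.

Lemma leadsB_same phi F F' G G' :
  same_atom F F' -> same_atom G G' -> leadsB phi F G -> leadsB phi F' G'.
Proof.
  intros HF HG [H1 [H2 [H3 H4]]].
  assert (EFo : forall a, obs phi F a <-> obs phi F' a)
    by (split; eauto using obs_same, same_atom_sym).
  assert (EFr : forall R a, Req phi R F a <-> Req phi R F' a)
    by (split; eauto using Req_same, same_atom_sym).
  assert (EGo : forall a, obs phi G a <-> obs phi G' a)
    by (split; eauto using obs_same, same_atom_sym).
  assert (EGr : forall R a, Req phi R G a <-> Req phi R G' a)
    by (split; eauto using Req_same, same_atom_sym).
  split; [|split; [|split]]; intro a;
    specialize (H1 a); specialize (H2 a); specialize (H3 a); specialize (H4 a);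
    rewrite <- ?EFo, <- ?EFr, <- ?EGo, <- ?EGr; tauto.
Qed.

Lemma InCl_norm phi : InCl phi (norm phi).
Proof. exists (norm phi); split; [destruct (norm phi); left; reflexivity | left; reflexivity]. Qed.

Section CompassFacts.

Variables (phi : formula) (N : nat) (L : point -> formula -> Prop).
Hypothesis HL : compass phi N L.

Lemma compass_leadsA w x z : w < x -> x < z -> z < N -> leadsA phi (L (w, x)) (L (x, z)).
Proof.
  intros. apply (proj1 (proj2 HL) RA (w, x) (x, z)); try discriminate;
    unfold inP, relP; cbn; lia.
Qed.

Lemma compass_leadsB x z z' : x < z' -> z' < z -> z < N -> leadsB phi (L (x, z)) (L (x, z')).
Proof.
  intros. apply (proj1 (proj2 HL) RB (x, z) (x, z')); try discriminate;
    unfold inP, relP; cbn; lia.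
Qed.

Lemma compass_fulfil R x z a : x < z -> z < N -> Req phi R (L (x, z)) a ->
  exists u v, u < v /\ v < N /\ relP R (x, z) (u, v) /\ obs phi (L (u, v)) a.
Proof.
  intros Hxz HzN HR.
  destruct (proj2 (proj2 HL) R (x, z) a) as [[u v] [[Huv HvN] [Hr Ho]]];
    [unfold inP; cbn; lia | exact HR |].
  exists u, v; auto.
Qed.

Lemma compass_Req_Bb_below x z v a :
  x < z -> z < v -> v < N -> obs phi (L (x, v)) a -> Req phi RBb (L (x, z)) a.
Proof. intros. apply (compass_leadsB x v z); auto. Qed.

Lemma compass_Req_B_above x v z a :
  x < v -> v < z -> z < N -> obs phi (L (x, v)) a -> Req phi RB (L (x, z)) a.
Proof. intros. apply (compass_leadsB x z v); auto. Qed.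

End CompassFacts.

Section Contraction.

Variables (phi : formula) (N : nat) (L : point -> formula -> Prop) (y0 y1 : nat)
  (g : nat -> nat).
Hypothesis HL : compass phi N L.
Hypothesis Hy01 : y0 < y1.
Hypothesis Hy1N : y1 < N.
Hypothesis Hg : forall x, x < y0 -> g x < y1 /\ same_atom (L (x, y0)) (L (g x, y1)).

Local Notation d := (y1 - y0).

Definition shift_col (x : nat) : nat := if x <? y0 then g x else x + d.

Definition contract (p : point) : formula -> Prop :=
  if snd p <=? y0 then L p else L (shift_col (fst p), snd p + d).

Lemma shift_col_lt x : x < y0 -> shift_col x = g x.
Proof. intro H; unfold shift_col; destruct (Nat.ltb_spec x y0); [reflexivity | lia]. Qed.

Lemma shift_col_ge x : y0 <= x -> shift_col x = x + d.
Proof. intro H; unfold shift_col; destruct (Nat.ltb_spec x y0); [lia | reflexivity]. Qed.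

Lemma shift_col_lt_iff x v : y0 <= v -> shift_col x < v + d <-> x < v.
Proof.
  intro Hv; destruct (Nat.lt_ge_cases x y0) as [Hx | Hx].
  - rewrite shift_col_lt by exact Hx; destruct (Hg x Hx); lia.
  - rewrite shift_col_ge by exact Hx; lia.
Qed.

Lemma contract_lo x y : y <= y0 -> contract (x, y) = L (x, y).
Proof. intro H; unfold contract; cbn; destruct (Nat.leb_spec y y0); [reflexivity | lia]. Qed.

Lemma contract_hi x y : y0 < y -> contract (x, y) = L (shift_col x, y + d).
Proof. intro H; unfold contract; cbn; destruct (Nat.leb_spec y y0); [lia | reflexivity]. Qed.

(* On row y0 both readings apply; this is where the shading inclusion enters. *)
Lemma contract_hi_same x y :
  x < y -> y0 <= y -> same_atom (contract (x, y)) (L (shift_col x, y + d)).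
Proof.
  intros Hxy Hy; destruct (Nat.eq_dec y y0) as [-> | Hne].
  - rewrite contract_lo, shift_col_lt by lia.
    replace (y0 + d) with y1 by lia; apply Hg; exact Hxy.
  - rewrite contract_hi by lia; intro; reflexivity.
Qed.

Lemma contract_view_col x z a : x < y0 -> y0 < z -> z < N - d ->
  view phi (contract (x, z)) a <-> view phi (L (x, y0)) a.
Proof.
  intros Hx Hz HzN; destruct (Hg x Hx) as [Hgx HgL].
  rewrite contract_hi, shift_col_lt, (view_same _ _ _ _ HgL) by lia.
  apply (leadsB_view phi), (compass_leadsB phi N L HL); lia.
Qed.

Lemma contract_inP x y : x < y -> y0 <= y -> y < N - d -> inP N (shift_col x, y + d).
Proof. intros Hxy Hy HyN; split; cbn; [apply shift_col_lt_iff|]; lia. Qed.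

Lemma contract_atom p : inP (N - d) p -> atom phi (contract p).
Proof.
  destruct p as [x y]; intros [Hxy HyN]; cbn in *.
  destruct (Nat.le_gt_cases y y0) as [Hy | Hy].
  - rewrite contract_lo by exact Hy; apply HL; split; cbn; lia.
  - rewrite contract_hi by exact Hy; apply HL, contract_inP; lia.
Qed.

Lemma contract_leadsA w x z : w < x -> x < z -> z < N - d ->
  leadsA phi (contract (w, x)) (contract (x, z)).
Proof.
  intros Hwx Hxz HzN.
  destruct (Nat.le_gt_cases z y0) as [Hz | Hz].
  { rewrite !contract_lo by lia; apply (compass_leadsA phi N L HL); lia. }
  destruct (Nat.lt_ge_cases x y0) as [Hx | Hx].
  - rewrite (contract_lo w x) by lia.
    apply leadsA_view with (L (x, y0)).
    + intro a; symmetry; apply contract_view_col; lia.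
    + apply (compass_leadsA phi N L HL); lia.
  - apply leadsA_same with (L (shift_col w, x + d)) (L (shift_col x, z + d)).
    1, 2: apply same_atom_sym, contract_hi_same; lia.
    rewrite (shift_col_ge x) by exact Hx.
    apply (compass_leadsA phi N L HL); [apply shift_col_lt_iff|..]; lia.
Qed.

Lemma contract_leadsB x z z' : x < z' -> z' < z -> z < N - d ->
  leadsB phi (contract (x, z)) (contract (x, z')).
Proof.
  intros Hxz' Hz'z HzN.
  destruct (Nat.le_gt_cases z y0) as [Hz | Hz].
  { rewrite !contract_lo by lia; apply (compass_leadsB phi N L HL); lia. }
  destruct (Nat.lt_ge_cases z' y0) as [Hz' | Hz'].
  - rewrite (contract_lo x z'), contract_hi, shift_col_lt by lia.
    destruct (Hg x ltac:(lia)) as [Hgx HgL].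
    apply leadsB_trans with (L (x, y0)); [|apply (compass_leadsB phi N L HL); lia].
    apply leadsB_same with (L (g x, z + d)) (L (g x, y1)); [intro; reflexivity | |].
    + apply same_atom_sym, HgL.
    + apply (compass_leadsB phi N L HL); lia.
  - apply leadsB_same with (L (shift_col x, z + d)) (L (shift_col x, z' + d)).
    1, 2: apply same_atom_sym, contract_hi_same; lia.
    apply (compass_leadsB phi N L HL); [apply shift_col_lt_iff|..]; lia.
Qed.

Lemma contract_fulfil_hi R x y a : x < y -> y0 <= y -> y < N - d ->
  Req phi R (contract (x, y)) a ->
  exists q, inP (N - d) q /\ relP R (x, y) q /\ obs phi (contract q) a.
Proof.
  intros Hxy Hy HyN HR.
  apply (Req_same _ _ _ _ _ (contract_hi_same x y Hxy Hy)) in HR.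
  assert (Hhx : shift_col x < y + d) by (apply shift_col_lt_iff; lia).
  destruct (compass_fulfil phi N L HL R _ _ a Hhx ltac:(lia) HR)
    as [u [v [Huv [HvN [Hr Ho]]]]].
  destruct R; cbn in Hr.
  - subst u; exists (y, v - d); split; [split; cbn; lia|]; split; [reflexivity|].
    rewrite contract_hi, shift_col_ge, Nat.sub_add by lia; exact Ho.
  - destruct Hr as [<- Hvy].
    destruct (Nat.lt_ge_cases v y1) as [Hv | Hv].
    + (* the request was fulfilled inside the removed strip *)
      assert (Hx : x < y0) by (apply (shift_col_lt_iff x y0); lia).
      rewrite shift_col_lt in Huv, Ho by exact Hx.
      destruct (Hg x Hx) as [Hgx HgL].
      assert (HB : Req phi RB (L (x, y0)) a).
      { apply (Req_same _ _ _ _ _ (same_atom_sym _ _ HgL)).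
        apply (compass_Req_B_above phi N L HL _ v); auto. }
      destruct (compass_fulfil phi N L HL RB x y0 a Hx ltac:(lia) HB)
        as [u [v' [Huv' [_ [[Hu Hv'] Ho']]]]]; cbn in Hu, Hv'; subst u.
      exists (x, v'); split; [split; cbn; lia|]; split; [cbn; lia|].
      rewrite contract_lo by lia; exact Ho'.
    + assert (Hxv : x < v - d) by (apply shift_col_lt_iff; lia).
      exists (x, v - d); split; [split; cbn; lia|]; split; [cbn; lia|].
      apply (obs_same _ _ _ _ (same_atom_sym _ _ (contract_hi_same _ _ Hxv ltac:(lia)))).
      rewrite Nat.sub_add by lia; exact Ho.
  - destruct Hr as [<- Hvy].
    exists (x, v - d); split; [split; cbn; lia|]; split; [cbn; lia|].
    rewrite contract_hi, Nat.sub_add by lia; exact Ho.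
Qed.

Lemma contract_obs_above c y v a : c <= y -> y < y0 -> y < v -> v < N ->
  obs phi (L (c, v)) a ->
  exists v', y < v' /\ v' < N - d /\ obs phi (contract (c, v')) a.
Proof.
  intros Hcy Hy Hyv HvN Ho; destruct (Nat.le_gt_cases v y0) as [Hv | Hv].
  { exists v; split; [|split]; [lia | lia | rewrite contract_lo by exact Hv; exact Ho]. }
  assert (HBb : Req phi RBb (contract (c, y0)) a).
  { rewrite contract_lo by lia; apply (compass_Req_Bb_below phi N L HL _ _ v); auto; lia. }
  destruct (contract_fulfil_hi RBb c y0 a ltac:(lia) ltac:(lia) ltac:(lia) HBb)
    as [[u v'] [Hq [Hr Ho']]].
  destruct Hq as [_ Hv'N]; destruct Hr as [Hu Hv']; cbn in Hu, Hv', Hv'N; subst u.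
  exists v'; split; [lia | auto].
Qed.

Lemma contract_fulfil_lo R x y a : x < y -> y < y0 -> Req phi R (contract (x, y)) a ->
  exists q, inP (N - d) q /\ relP R (x, y) q /\ obs phi (contract q) a.
Proof.
  intros Hxy Hy HR; rewrite contract_lo in HR by lia.
  destruct (compass_fulfil phi N L HL R x y a Hxy ltac:(lia) HR)
    as [u [v [Huv [HvN [Hr Ho]]]]].
  destruct R; cbn in Hr.
  - subst u; destruct (contract_obs_above y y v a (le_n y) Hy Huv HvN Ho)
      as [v' [Hv' [Hv'N Ho']]].
    exists (y, v'); split; [split; cbn; lia|]; split; [reflexivity | exact Ho'].
  - destruct Hr as [Hu Hv]; subst u.
    exists (x, v); split; [split; cbn; lia|]; split; [cbn; lia|].
    rewrite contract_lo by lia; exact Ho.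
  - destruct Hr as [Hu Hv]; subst u.
    destruct (contract_obs_above x y v a ltac:(lia) Hy Hv HvN Ho) as [v' [Hv' [Hv'N Ho']]].
    exists (x, v'); split; [split; cbn; lia|]; split; [cbn; lia | exact Ho'].
Qed.

Lemma contract_compass : compass phi (N - d) contract.
Proof.
  split; [exact contract_atom | split].
  - intros R [w x] [x' z] HR [Hwx HxN] [Hx'z HzN] Hr; cbn in *.
    destruct R; cbn in Hr |- *; [subst x' | destruct Hr as [<- Hzx] | congruence].
    + apply contract_leadsA; lia.
    + apply contract_leadsB; lia.
  - intros R [x y] a [Hxy HyN] HR; cbn in *.
    destruct (Nat.lt_ge_cases y y0) as [Hy | Hy].
    + apply contract_fulfil_lo; assumption.
    + apply contract_fulfil_hi; assumption.
Qed.

Lemma contract_features y : 0 < y0 -> 0 < y -> y < N -> L (0, y) (norm phi) ->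
  features phi (N - d) contract.
Proof.
  intros Hy0 Hy HyN Hphi.
  destruct (contract_obs_above 0 0 y (norm phi) (le_n 0) Hy0 Hy HyN
    (conj (InCl_norm phi) Hphi)) as [v [Hv [HvN [_ Ho]]]].
  exists (0, v); split; [split; cbn; lia | exact Ho].
Qed.

End Contraction.

Lemma shading_sub_choice L y0 y1 : shading_sub L y0 y1 ->
  exists g, forall x, x < y0 -> g x < y1 /\ same_atom (L (x, y0)) (L (g x, y1)).
Proof.
  intro Hsh.
  apply (choice (fun x x' => x < y0 -> x' < y1 /\ same_atom (L (x, y0)) (L (x', y1)))).
  intro x; destruct (Nat.lt_ge_cases x y0) as [Hx | Hx].
  - destruct (Hsh x Hx) as [x' Hx']; exists x'; intros _; exact Hx'.
  - exists 0; lia.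
Qed.

Theorem lemma2 (phi : formula) (N : nat) (L : point -> formula -> Prop) :
  compass phi N L ->
  (exists y, 0 < y < N /\ L (0, y) (norm phi)) ->
  (exists y0 y1, 0 < y0 < y1 /\ y1 < N /\ shading_sub L y0 y1) ->
  exists N' (L' : point -> formula -> Prop),
    N' < N /\ compass phi N' L' /\ features phi N' L'.
Proof.
  intros HL [y [Hy Hphi]] [y0 [y1 [Hy01 [Hy1N Hsh]]]].
  destruct (shading_sub_choice L y0 y1 Hsh) as [g Hg].
  exists (N - (y1 - y0)), (contract L y0 y1 g); split; [lia | split].
  - apply contract_compass; auto; lia.
  - apply (contract_features phi N L y0 y1 g HL) with y; auto; lia.
Qed.
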